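(* For each integer $k\geq2$ let $O_k=\langle x,e\mid x^k=x^{k-1}e=0,\ ex=x,\ e^2=e\rangle$. Then: (i) for each $k\geq2$, the pseudovariety $\llbracket O_k^{\mathsf{bar}}\rrbracket$ is join irreducible and \[\operatorname{Excl}(O_k^{\mathsf{bar}})=\llbracket(\mathbf{e}c(a^\omega b)^{k-1})^\omega\approx(\mathbf{e}c((a^\omega b)^{k-1})^{\omega+1})^\omega\rrbracket,\] where $\mathbf{e}$ is an idempotent in the minimal ideal of $\widehat{\{a,b,c\}^+}$; (ii) the pseudovarieties $\llbracket O_2^{\mathsf{bar}}\rrbracket,\llbracket O_3^{\mathsf{bar}}\rrbracket,\llbracket O_4^{\mathsf{bar}}\rrbracket,\dots$ are pairwise distinct.
   Context: All semigroups are finite (here $O_k$ is the finite semigroup given by the presentation, with $0$ a zero element). A pseudovariety is a class of finite semigroups closed under finite direct products, subsemigroups and homomorphic images; $\llbracket S\rrbracket$ is the pseudovariety generated by $S$ and $\llbracket\Sigma\rrbracket$ the pseudovariety defined by pseudoidentities $\Sigma$. $\widehat{A^+}$ is the free profinite semigroup on $A$ and $\mathbf{x}^\omega$ the idempotent power, $\mathbf{x}^{\omega+1}=\mathbf{x}^\omega\mathbf{x}$. A pseudovariety $\mathbf{V}$ is join irreducible if for every set $\mathscr{X}$ of pseudovarieties, $\mathbf{V}\subseteq\bigvee\mathscr{X}$ implies $\mathbf{V}\subseteq\mathbf{X}$ for some $\mathbf{X}\in\mathscr{X}$. $\operatorname{Excl}(S)$ is the class of finite semigroups $T$ with $S\notin\llbracket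 T\rrbracket$. For a semigroup $S$, $S^\bullet=S$ if $S$ is a monoid and $S^\bullet=S^I$ (external identity adjoined) otherwise; $S^{\mathsf{bar}}$ is the semigroup of transformations of $S^\bullet$ (acting on the right) consisting of right multiplications by elements of $S$ together with all constant maps on $S^\bullet$. *)

From HB Require Import structures.
From mathcomp Require Import all_boot.
From mathcomp Require Import zify.
Set Implicit Arguments. Unset Strict Implicit. Unset Printing Implicit Defensive.

Record fsg := FSG {
  fcar :> finType;
  fmul : fcar -> fcar -> fcar;
  fmulA : associative fmul;
  fne : 0 < #|fcar| }.
Arguments fmul : clear implicits.

Definition is_hom (S T : fsg) (h : S -> T) : Prop :=
  forall x y, h (fmul S x y) = fmul T (h x) (h y).

Definition fprod_mul (S T : fsg) (x y : (S * T)%type) : (S * T)%type :=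
  (fmul S x.1 y.1, fmul T x.2 y.2).

Lemma fprod_mulA (S T : fsg) : associative (@fprod_mul S T).
Proof. by move=> x y z; rewrite /fprod_mul /= !fmulA. Qed.

Lemma fprod_ne (S T : fsg) : 0 < #|{: (S * T)%type}|.
Proof. by rewrite card_prod muln_gt0 !fne. Qed.

Definition fprod (S T : fsg) : fsg := FSG (@fprod_mulA S T) (fprod_ne S T).

(* ---------- the semigroup O_k = <x,e | x^k = x^(k-1)e = 0, ex = x, e^2 = e> ----------
   Normal forms: x^i e^b (b : bool), encoded as (i,b), with (0,true) = e,
   (i,false) = x^i (1 <= i <= k-1), (i,true) = x^i e (1 <= i <= k-2),
   and the zero 0 encoded as None. *)
Definition okv (k : nat) (p : nat * bool) : bool :=
  (p.1 < k) && (if p.1 == 0 then p.2 else p.2 ==> (p.1.+2 <= k)).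

(* product of words x^i e^b . x^j e^c = x^(i+j) e^(c || (b && j == 0)) *)
Definition rmul (k : nat) (x y : option (nat * bool)) : option (nat * bool) :=
  match x, y with
  | Some (i, b), Some (j, c) =>
      let r := (i + j, c || (b && (j == 0))) in if okv k r then Some r else None
  | _, _ => None
  end.

Definition rvalid k (x : option (nat * bool)) : bool :=
  if x is Some p then okv k p else true.

Lemma rmul_valid k x y : rvalid k (rmul k x y).
Proof.
case: x => [[i b]|]; case: y => [[j c]|] //=.
by case: ifP.
Qed.

Lemma okvE k n (f : bool) :
  okv k (n, f) = [&& n < k, (~~ f) || (n == 0) || (n.+2 <= k) & f || (n != 0)].
Proof. by rewrite /okv /=; case: f; case: n => [|n] /=; rewrite ?andbT. Qed.

Lemma rmulA k x y z : rvalid k x -> rvalid k y -> rvalid k z ->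
  rmul k (rmul k x y) z = rmul k x (rmul k y z).
Proof.
case: x => [[i b]|]; case: y => [[j c]|]; case: z => [[l d]|] //=;
  try by case: ifP.
move=> Hx Hy Hz.
case: b Hx; case: c Hy; case: d Hz => /= Hz Hy Hx;
do ! (case: ifP => /=); rewrite ?addnA //.
all: move=> *; repeat match goal with
  | H : is_true (okv _ _) |- _ => rewrite okvE in H
  | H : okv _ _ = false |- _ => rewrite okvE in H end.
all: try lia.
all: try (congr (Some (_, _)); lia).
Qed.

Definition ocpred (k : nat) (p : ('I_k * bool)%type) : bool := okv k (val p.1, p.2).
Definition Ocar (k : nat) : finType := option {p : ('I_k * bool)%type | ocpred p}.

Definition toraw k (x : Ocar k) : option (nat * bool) :=
  omap (fun s => (val (val s).1, (val s).2)) x.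

Definition fromraw k (r : option (nat * bool)) : Ocar k :=
  if r is Some (n, f) then
    (if @insub _ (fun n => n < k) 'I_k n is Some i then insub (i, f) else None)
  else None.

Lemma toraw_valid k x : rvalid k (toraw (k := k) x).
Proof. by case: x => [[[i b] /= H]|]. Qed.

Lemma fromrawK k r : rvalid k r -> toraw (fromraw k r) = r.
Proof.
case: r => [[n f]|] //= H.
have Hn : n < k by move: H; rewrite /okv /= => /andP[].
rewrite (insubT (fun n => n < k) Hn) /=.
by rewrite insubT.
Qed.

Lemma torawK k x : fromraw k (toraw x) = x.
Proof.
case: x => [[[i b] /= H]|] //=.
rewrite (insubT (fun n => n < k) (ltn_ord i)) /=.
have -> : Sub (nat_of_ord i) (ltn_ord i) = i by apply: val_inj.
by rewrite insubT.
Qed.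

Definition omul k (x y : Ocar k) : Ocar k := fromraw k (rmul k (toraw x) (toraw y)).

Lemma omulA k : associative (@omul k).
Proof.
move=> x y z; rewrite /omul !fromrawK ?rmul_valid // rmulA //; exact: toraw_valid.
Qed.

Lemma Ocar_ne k : 0 < #|Ocar k|.
Proof. by apply/card_gt0P; exists None. Qed.

Definition Osg (k : nat) : fsg := FSG (@omulA k) (Ocar_ne k).

Definition is_monoid (S : fsg) : bool :=
  [exists u : S, [forall s : S, (fmul S u s == s) && (fmul S s u == s)]].

(* S^bullet is modelled inside option S: None is the adjoined identity I,
   which is present exactly when S is not a monoid. *)
Definition bpred (S : fsg) (b : option S) : bool := ~~ (is_monoid S && (b == None)).
Arguments bpred : clear implicits.
Definition Bul (S : fsg) : finType := {b : option S | bpred S b}.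

Definition bmul (S : fsg) (b : option S) (s : S) : option S :=
  Some (if b is Some a then fmul S a s else s).

Lemma bpred_bmul (S : fsg) b s : bpred S (bmul b s).
Proof. by rewrite /bpred /bmul /= andbF. Qed.

Definition rho (S : fsg) (s : S) : {ffun Bul S -> Bul S} :=
  [ffun b : Bul S => Sub (bmul (val b) s) (bpred_bmul (val b) s)].
Definition cst (S : fsg) (t : Bul S) : {ffun Bul S -> Bul S} := [ffun _ => t].

Definition barpred (S : fsg) (f : {ffun Bul S -> Bul S}) : bool :=
  [exists s : S, f == rho s] || [exists t : Bul S, f == cst t].

(* transformations act on the right: x (f g) = (x f) g *)
Definition tcomp (S : fsg) (f g : {ffun Bul S -> Bul S}) : {ffun Bul S -> Bul S} :=
  [ffun x => g (f x)].

Lemma barpred_comp (S : fsg) f g :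
  barpred f -> barpred g -> barpred (tcomp (S := S) f g).
Proof.
case/orP=> [/existsP[s /eqP->]|/existsP[t /eqP->]];
case/orP=> [/existsP[s' /eqP->]|/existsP[t' /eqP->]].
- apply/orP; left; apply/existsP; exists (fmul S s s'); apply/eqP/ffunP => b.
  rewrite !ffunE; apply: val_inj => /=.
  by rewrite /bmul; case: (sval b) => [a|] //=; rewrite fmulA.
- by apply/orP; right; apply/existsP; exists t'; apply/eqP/ffunP => b; rewrite !ffunE.
- apply/orP; right; apply/existsP; exists (rho s' t); apply/eqP/ffunP => b.
  by rewrite !ffunE.
- by apply/orP; right; apply/existsP; exists t'; apply/eqP/ffunP => b; rewrite !ffunE.
Qed.

Definition Barcar (S : fsg) : finType := {f : {ffun Bul S -> Bul S} | barpred f}.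

Definition barmul (S : fsg) (f g : Barcar S) : Barcar S :=
  Sub (tcomp (val f) (val g)) (barpred_comp (valP f) (valP g)).

Lemma barmulA (S : fsg) : associative (@barmul S).
Proof. by move=> f g h; apply: val_inj; apply/ffunP => x; rewrite /= !ffunE. Qed.

Lemma Barcar_ne (S : fsg) : 0 < #|Barcar S|.
Proof.
have /card_gt0P[s _] := fne S.
have Hb : bpred S (Some s) by rewrite /bpred andbF.
have Hc : barpred (cst (Sub (Some s) Hb : Bul S)).
  by apply/orP; right; apply/existsP; eexists.
by apply/card_gt0P; exists (Sub _ Hc).
Qed.

Definition bar (S : fsg) : fsg := FSG (@barmulA S) (Barcar_ne S).

Definition Obar (k : nat) : fsg := bar (Osg k).

(* A pseudovariety is closed
   under finite direct products (the empty product being a trivial semigroup,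
   plus binary products), subsemigroups (up to isomorphism: injective homs)
   and homomorphic images. *)
Definition pseudovariety (V : fsg -> Prop) : Prop :=
  [/\ (forall S : fsg, #|S| = 1 -> V S),
      (forall S T : fsg, V S -> V T -> V (fprod S T)),
      (forall (S T : fsg) (h : T -> S), is_hom h -> injective h -> V S -> V T) &
      (forall (S T : fsg) (h : S -> T), is_hom h -> (forall y, exists x, h x = y) ->
         V S -> V T)].

Definition subclass (V W : fsg -> Prop) : Prop := forall S, V S -> W S.

Definition pv_gen (C : fsg -> Prop) : fsg -> Prop :=
  fun T => forall V, pseudovariety V -> subclass C V -> V T.

Definition pv_of (S : fsg) : fsg -> Prop := pv_gen (fun T => T = S).

Definition pv_join (X : (fsg -> Prop) -> Prop) : fsg -> Prop :=
  pv_gen (fun T => exists2 V, X V & V T).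

Definition join_irreducible (V : fsg -> Prop) : Prop :=
  forall X : (fsg -> Prop) -> Prop, (forall W, X W -> pseudovariety W) ->
    subclass V (pv_join X) -> exists2 W, X W & subclass V W.

Definition Excl (S : fsg) : fsg -> Prop := fun T => ~ pv_of T S.

(* ---------- the free profinite semigroup on {a,b,c} ----------
   realised (Reiterman/Almeida) as the semigroup of 3-ary implicit operations on
   finite semigroups: families pi_S : S^{a,b,c} -> S commuting with all
   homomorphisms between finite semigroups. *)
Inductive letter := la | lb | lc.

Record impl := Impl {
  iop : forall S : fsg, (letter -> S) -> S;
  iop_nat : forall (S T : fsg) (h : S -> T), is_hom h ->
              forall phi : letter -> S, h (iop phi) = iop (h \o phi) }.
Arguments iop : clear implicits.

Lemma impl_mul_nat (u v : impl) (S T : fsg) (h : S -> T) : is_hom h ->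
  forall phi : letter -> S,
    h (fmul S (iop u S phi) (iop v S phi)) = fmul T (iop u T (h \o phi)) (iop v T (h \o phi)).
Proof. move=> hh phi; rewrite hh. rewrite (iop_nat u hh) (iop_nat v hh). by []. Qed.

Definition impl_mul (u v : impl) : impl :=
  @Impl (fun S phi => fmul S (iop u S phi) (iop v S phi)) (@impl_mul_nat u v).

Definition is_ideal (I : impl -> Prop) : Prop :=
  (exists x, I x) /\
  (forall x u, I x -> I (impl_mul u x) /\ I (impl_mul x u)).

Definition in_minimal_ideal (e : impl) : Prop :=
  forall I, is_ideal I -> I e.

(* spow x n = x^(n+1) *)
Definition spow (S : fsg) (x : S) (n : nat) : S := iter n (fun y => fmul S y x) x.
(* x^omega = x^(|S|!), the idempotent power of x *)
Definition omega (S : fsg) (x : S) : S := spow x (#|S|`!).-1.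
Definition omega1 (S : fsg) (x : S) : S := fmul S (omega x) x.

Definition sat_pid (k : nat) (e : impl) (T : fsg) : Prop :=
  forall phi : letter -> T,
    let E := iop e T phi in
    let P := spow (fmul T (omega (phi la)) (phi lb)) (k - 2) in
    omega (fmul T (fmul T E (phi lc)) P) =
    omega (fmul T (fmul T E (phi lc)) (omega1 P)).

(* Fix k >= 2 and call an evaluation of a, b, c in T, together with E, bad when E
   lies in the minimal ideal of the subsemigroup generated by the values of the
   letters and (E c (a^w b)^(k-1))^w <> (E c ((a^w b)^(k-1))^(w+1))^w.  The finite
   semigroups without bad evaluations form a pseudovariety, which contains those
   satisfying the pseudoidentity of the theorem and misses O_k^bar (take
   a = rho_e, b = rho_x, c = the constant map to e).  Conversely, from a bad
   evaluation put g = E c and y = a^w b.  The elements g y^i (i < k) are pairwise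
   not L-equivalent: an L-equivalence would make g y^(k-1) L-equivalent to
   g y^(k-1) y^w, and inside the minimal ideal this forces the two w-powers to be
   equal.  Encoding the elements of O_k^I by pairs of such L-classes, the pairs of
   T x T acting on these codes as right multiplications do in O_k^bar form a
   subsemigroup mapping onto O_k^bar.  So Excl(O_k^bar) is that pseudovariety,
   whence join irreducibility and its equational description.  Finally O_k^bar
   satisfies x^k = x^(k+1), which O_l^bar violates for l > k. *)

From Pilot Require Import Defs.
From mathcomp Require Import all_boot zify.
From Stdlib Require Import Classical ClassicalEpsilon FunctionalExtensionality.
Set Implicit Arguments. Unset Strict Implicit. Unset Printing Implicit Defensive.

Notation "x ** y" := (fmul _ x y) (at level 40, left associativity).

Section Powers.
Variable S : fsg.
Implicit Types x y : S.

Lemma spowS x n : spow x n.+1 = spow x n ** x.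
Proof. by []. Qed.

Lemma spowSl x n : spow x n.+1 = x ** spow x n.
Proof. by elim: n => [|n IH] //; rewrite spowS [in LHS]IH -fmulA. Qed.

Lemma spowD x m n : spow x m ** spow x n = spow x (m + n).+1.
Proof.
elim: n => [|n IH]; first by rewrite addn0.
by rewrite spowS fmulA IH addnS.
Qed.

Lemma spowM x m n : spow (spow x m) n = spow x (m.+1 * n.+1).-1.
Proof.
elim: n => [|n IH]; first by rewrite muln1.
rewrite spowS IH spowD; congr spow.
have : 0 < m.+1 * n.+1 by rewrite muln_gt0.
rewrite mulnS; lia.
Qed.

Lemma spow_idem x n : x ** x = x -> spow x n = x.
Proof. by move=> xx; elim: n => [|n IH] //; rewrite spowS IH xx. Qed.

Lemma spow_eventually_periodic x : exists m d, [/\ 0 < d, d <= #|S|, m < #|S| &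
  forall i c, m <= i -> spow x (i + c * d) = spow x i].
Proof.
pose f (i : 'I_#|S|.+1) := spow x i.
have [inj|/injectivePn[i [j ij fij]]] := altP (injectiveP f).
  by have /leq_card := inj; rewrite card_ord ltnn.
wlog lt_ij : i j ij fij / i < j.
  move=> W; case: (ltngtP i j) => h; first exact: W h.
    by apply: (W j i) => //; rewrite eq_sym.
  by move: ij; rewrite (val_inj h) eqxx.
have {}fij : spow x i = spow x j by [].
have shift i' : i <= i' -> spow x (i' + (j - i)) = spow x i'.
  elim: i' => [|i' IH] le_ii'.
    have i0 : nat_of_ord i = 0 by lia.
    by rewrite add0n i0 subn0 -fij i0.
  have [lt_ii'|eq_ii'] : i < i'.+1 \/ nat_of_ord i = i'.+1 by lia.
    by rewrite addSn spowS IH // spowS.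
  by rewrite -eq_ii' subnKC // ltnW.
exists i, (j - i); split; [lia | have := ltn_ord j; lia | have := ltn_ord j; lia |].
move=> i' c le_ii'; elim: c => [|c IH]; first by rewrite addn0.
rewrite (_ : i' + c.+1 * (j - i) = i' + c * (j - i) + (j - i)); last by rewrite mulSn; lia.
by rewrite shift ?IH //; lia.
Qed.

Local Notation N := (#|S|`!).

Lemma omega_spow_mul x c : 0 < c -> spow x (c * N).-1 = omega x.
Proof.
move=> c_gt0; have [m [d [d_gt0 dS mS per]]] := spow_eventually_periodic x.
have /dvdnP[q Nq] : d %| N by rewrite dvdn_fact // d_gt0.
have N_gt0 := fact_gt0 #|S|.
have m_le : m <= N.-1 by have := fact_geq #|S|; lia.
rewrite /omega -(per _ ((c.-1) * q) m_le); congr spow.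
move: N_gt0; rewrite Nq; case: c c_gt0 => // c _ /=; nia.
Qed.

Lemma omega_idem x : omega x ** omega x = omega x.
Proof.
rewrite -{3}(omega_spow_mul x (c := 2)) // /omega spowD; congr spow.
have := fact_gt0 #|S|; lia.
Qed.

Lemma omega_idem_spow x n : spow x n ** spow x n = spow x n -> spow x n = omega x.
Proof.
move=> idem; rewrite -(spow_idem N.-1 idem) spowM -(omega_spow_mul x (c := n.+1)) //.
congr spow; have := fact_gt0 #|S|; case: N => // M _; lia.
Qed.

Lemma omega_spow x n : omega (spow x n) = omega x.
Proof.
rewrite -(omega_spow_mul x (c := n.+1)) // /omega spowM; congr spow.
have := fact_gt0 #|S|; case: N => // M _; lia.
Qed.

Lemma omega_commute x n : omega x ** spow x n = spow x n ** omega x.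
Proof. by rewrite /omega !spowD addnC. Qed.

Lemma omega_of_idem x : x ** x = x -> omega x = x.
Proof. exact: spow_idem. Qed.

End Powers.

Section Morphisms.
Variables (S T : fsg) (h : S -> T).
Hypothesis hom_h : is_hom h.

Lemma hom_spow x n : h (spow x n) = spow (h x) n.
Proof. by elim: n => [|n IH] //; rewrite !spowS hom_h IH. Qed.

Lemma hom_omega x : h (omega x) = omega (h x).
Proof. by rewrite /omega hom_spow; apply: omega_idem_spow; rewrite -hom_spow -hom_h omega_idem. Qed.

Lemma hom_omega1 x : h (omega1 x) = omega1 (h x).
Proof. by rewrite /omega1 hom_h hom_omega. Qed.

End Morphisms.

Lemma pv_of_self S : pv_of S S.
Proof. by move=> V _; apply. Qed.

Lemma pv_of_min S V : pseudovariety V -> V S -> subclass (pv_of S) V.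
Proof. by move=> pvV VS T; apply => // _ ->. Qed.

Lemma join_irreducible_pv_of S (G : fsg -> Prop) : pseudovariety G -> ~ G S ->
  (forall T, ~ G T -> pv_of T S) -> join_irreducible (pv_of S).
Proof.
move=> pvG GNS GNgen X pvX Sjoin; apply: NNPP => noW.
have XG W : X W -> subclass W G.
  move=> XW T WT; apply: NNPP => GNT; apply: noW; exists W => //.
  by apply: pv_of_min (pvX _ XW) _; apply: (GNgen _ GNT _ (pvX _ XW)) => _ ->.
by apply: GNS; have := Sjoin S (@pv_of_self S) G pvG; apply=> T [W /XG WG /WG].
Qed.

Definition natural (u : forall T : fsg, (letter -> T) -> T -> T) : Prop :=
  forall (S T : fsg) (h : S -> T), is_hom h ->
    forall phi E, h (u S phi E) = u T (h \o phi) (h E).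

(* [E] is an extra variable whose admissible values may depend on [phi]. *)
Definition holds_at (u v : forall T : fsg, (letter -> T) -> T -> T)
    (Sel : forall T : fsg, (letter -> T) -> T -> Prop) (T : fsg) : Prop :=
  forall phi E, Sel T phi E -> u T phi E = v T phi E.

Lemma fst_hom (S T : fsg) : is_hom (fun p : Defs.fprod S T => p.1).
Proof. by []. Qed.

Lemma snd_hom (S T : fsg) : is_hom (fun p : Defs.fprod S T => p.2).
Proof. by []. Qed.

Lemma surj_lift (S T : fsg) (h : S -> T) : (forall y, exists x, h x = y) ->
  forall phi : letter -> T, exists psi, h \o psi = phi.
Proof.
move=> h_surj phi.
have [[xa ea] [xb eb] [xc ec]] := And3 (h_surj (phi la)) (h_surj (phi lb)) (h_surj (phi lc)).
exists (fun l => match l with la => xa | lb => xb | lc => xc end).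
by apply: functional_extensionality => -[].
Qed.

Section EquationalClass.
Variables u v : forall T : fsg, (letter -> T) -> T -> T.
Variable Sel : forall T : fsg, (letter -> T) -> T -> Prop.
Hypotheses (nat_u : natural u) (nat_v : natural v).
Hypothesis Sel_hom : forall (S T : fsg) (h : S -> T), is_hom h ->
  forall phi E, Sel phi E -> Sel (h \o phi) (h E).
Hypothesis Sel_lift : forall (S T : fsg) (h : S -> T), is_hom h ->
  (forall y, exists x, h x = y) -> forall phi E, Sel phi E ->
  exists psi E', [/\ Sel psi E', h \o psi = phi & h E' = E].

Lemma holds_at_pv : pseudovariety (holds_at u v Sel).
Proof.
split.
- move=> S S1 phi E _.
  have /card_le1_eqP S_trivial : #|S| <= 1 by rewrite S1.
  exact: S_trivial.
- move=> S T HS HT phi E SelE.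
  have := HS _ _ (Sel_hom (@fst_hom S T) SelE).
  rewrite -(nat_u (@fst_hom S T)) -(nat_v (@fst_hom S T)) /= => e1.
  have := HT _ _ (Sel_hom (@snd_hom S T) SelE).
  rewrite -(nat_u (@snd_hom S T)) -(nat_v (@snd_hom S T)) /= => e2.
  by rewrite [LHS]surjective_pairing e1 e2 -surjective_pairing.
- move=> S T h hom_h inj_h HS phi E SelE; apply: inj_h.
  by rewrite nat_u // nat_v //; apply/HS/Sel_hom.
- move=> S T h hom_h surj_h HS phi E SelE.
  have [psi [E' [SelE' <- <-]]] := Sel_lift hom_h surj_h SelE.
  by rewrite -nat_u // -nat_v // HS.
Qed.

End EquationalClass.

Section GreenPreorders.
Variable T : fsg.
Implicit Types x y z a b : T.

(* Products in T^1, the option None standing for the empty factor. *)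
Definition mul1l (A : option T) x := if A is Some a then a ** x else x.
Definition mul1r x (B : option T) := if B is Some b then x ** b else x.

Lemma mul1lM A x y : mul1l A (x ** y) = mul1l A x ** y.
Proof. by case: A => //= a; rewrite fmulA. Qed.

Lemma mul1rM B x y : mul1r (x ** y) B = x ** mul1r y B.
Proof. by case: B => //= b; rewrite fmulA. Qed.

Lemma mul1lr A B x : mul1l A (mul1r x B) = mul1r (mul1l A x) B.
Proof. by case: A; case: B => //= a b; rewrite fmulA. Qed.

Lemma mulr_mul1l x A y : x ** mul1l A y = mul1l (Some (mul1r x A)) y.
Proof. by case: A => //= a; rewrite fmulA. Qed.

Lemma mul1r_mull y B x : mul1r y B ** x = mul1r y (Some (mul1l B x)).
Proof. by case: B => //= b; rewrite fmulA. Qed.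

Definition Jle x y := exists A B, x = mul1l A (mul1r y B).
Definition Lle x y := exists A, mul1l A y = x.
Definition Rle x y := exists B, mul1r y B = x.
Definition Lequiv x y := Lle x y /\ Lle y x.

Lemma Jle_mull x y z : Jle x y -> Jle (z ** x) y.
Proof. by move=> [A [B ->]]; exists (Some (mul1r z A)), B; rewrite mulr_mul1l. Qed.

Lemma Jle_mulr x y z : Jle x y -> Jle (x ** z) y.
Proof. by move=> [A [B ->]]; exists A, (Some (mul1l B z)); rewrite -mul1lM mul1r_mull. Qed.

Lemma Lle_refl x : Lle x x.
Proof. by exists None. Qed.

Lemma Lle_trans x y z : Lle x y -> Lle y z -> Lle x z.
Proof.
move=> [A <-] [[b|] <-]; last by exists A.
by exists (Some (mul1l A b)); rewrite /= mul1lM.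
Qed.

Lemma Rle_trans x y z : Rle x y -> Rle y z -> Rle x z.
Proof.
move=> [B <-] [[c|] <-]; last by exists B.
by exists (Some (mul1r c B)); rewrite /= mul1rM.
Qed.

Lemma Lle_mulr x y z : Lle x y -> Lle (x ** z) (y ** z).
Proof. by move=> [A <-]; exists A; rewrite mul1lM. Qed.

Lemma Rle_mull x y z : Rle x y -> Rle (z ** x) (z ** y).
Proof. by move=> [B <-]; exists B; rewrite mul1rM. Qed.

Lemma Lequiv_refl x : Lequiv x x.
Proof. by split; apply: Lle_refl. Qed.

Lemma Lequiv_sym x y : Lequiv x y -> Lequiv y x.
Proof. by case. Qed.

Lemma Lequiv_trans x y z : Lequiv x y -> Lequiv y z -> Lequiv x z.
Proof. by move=> [xy yx] [yz zy]; split; apply: Lle_trans; eassumption. Qed.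

Lemma Lequiv_mulr x y z : Lequiv x y -> Lequiv (x ** z) (y ** z).
Proof. by move=> [xy yx]; split; apply: Lle_mulr. Qed.

Lemma Lle_omega x : Lle (omega x) x.
Proof.
rewrite /omega; case: _.-1 => [|m]; first exact: Lle_refl.
by exists (Some (spow x m)).
Qed.

Lemma Rle_omega x : Rle (omega x) x.
Proof.
rewrite /omega; case: _.-1 => [|m]; first by exists None.
by exists (Some (spow x m)); rewrite spowSl.
Qed.

Lemma omega_fixl a x : x = a ** x -> x = omega a ** x.
Proof.
by move=> fix_x; rewrite /omega; elim: _.-1 => [|n IH] //; rewrite spowS -fmulA -fix_x.
Qed.

Lemma omega_fixr b x : x = x ** b -> x = x ** omega b.
Proof.
by move=> fix_x; rewrite /omega; elim: _.-1 => [|n IH] //; rewrite spowS fmulA -IH -fix_x.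
Qed.

Lemma omega_fixlr a b x : x = a ** x ** b -> x = omega a ** x /\ x = x ** omega b.
Proof.
move=> fix_x.
have fix_n n : x = spow a n ** x ** spow b n.
  elim: n => [|n IH] //; rewrite spowS spowSl.
  suff -> : spow a n ** a ** x ** (b ** spow b n) = spow a n ** (a ** x ** b) ** spow b n.
    by rewrite -fix_x.
  by rewrite !fmulA.
have {}fix_x := fix_n (#|T|`!).-1; rewrite -/(omega a) -/(omega b) in fix_x.
split.
- by rewrite {2}fix_x !fmulA omega_idem -fix_x.
- by rewrite {2}fix_x -fmulA omega_idem -fix_x.
Qed.

End GreenPreorders.

Section Kernel.
Variables (T : fsg) (phi : letter -> T).
Implicit Types x y p t : T.

Definition in_sgen t := exists u : impl, iop u T phi = t.
Definition jbelow t := forall s, in_sgen s -> Jle t s.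
Definition in_kernel t := in_sgen t /\ jbelow t.

Lemma in_sgen_mul x y : in_sgen x -> in_sgen y -> in_sgen (x ** y).
Proof. by move=> [u <-] [v <-]; exists (impl_mul u v). Qed.

Lemma in_sgen_letter l : in_sgen (phi l).
Proof. by exists (@Impl (fun S phi => phi l) (fun S T h hh phi => erefl)). Qed.

Lemma in_sgen_spow x n : in_sgen x -> in_sgen (spow x n).
Proof. by move=> sx; elim: n => [|n IH] //; rewrite spowS; apply: in_sgen_mul. Qed.

Lemma in_sgen_omega x : in_sgen x -> in_sgen (omega x).
Proof. exact: in_sgen_spow. Qed.

Lemma jbelow_mull x t : jbelow t -> jbelow (x ** t).
Proof. by move=> jt s /jt; apply: Jle_mull. Qed.

Lemma jbelow_mulr x t : jbelow t -> jbelow (t ** x).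
Proof. by move=> jt s /jt; apply: Jle_mulr. Qed.

Lemma in_kernel_mull x t : in_sgen x -> in_kernel t -> in_kernel (x ** t).
Proof. by move=> sx [st jt]; split; [apply: in_sgen_mul | apply: jbelow_mull]. Qed.

Lemma in_kernel_mulr x t : in_kernel t -> in_sgen x -> in_kernel (t ** x).
Proof. by move=> [st jt] sx; split; [apply: in_sgen_mul | apply: jbelow_mulr]. Qed.

Lemma in_kernel_omega t : in_kernel t -> in_kernel (omega t).
Proof.
move=> kt; rewrite /omega; elim: _.-1 => [|n IH] //.
by rewrite spowS; apply: in_kernel_mulr IH kt.1.
Qed.

Lemma kernel_exists : exists t, in_kernel t.
Proof.
suff [t st jt] : exists2 t, in_sgen t & forall s, s \in enum T -> in_sgen s -> Jle t s.
  by exists t; split=> // s; apply: jt; rewrite mem_enum.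
elim: (enum T) => [|x l [t st jt]]; first by exists (phi la); first exact: in_sgen_letter.
have [sx|nsx] := classic (in_sgen x); last first.
  by exists t => // s; rewrite in_cons => /orP[/eqP-> /nsx|/jt].
exists (t ** x); first exact: in_sgen_mul.
move=> s; rewrite in_cons => /orP[/eqP-> _|/jt jts /jts]; last exact: Jle_mulr.
by exists (Some t), None.
Qed.

Lemma kernel_Lle_mull t p : in_kernel t -> in_sgen p -> Lle t (p ** t).
Proof.
move=> [st jt] sp; have [A [B def_t]] := jt _ (in_sgen_mul sp st).
rewrite mul1lr mul1lM in def_t; set a := mul1l A p in def_t.
have fix_t : t = omega a ** t.
  by case: B def_t => [b|] /= def_t; [case: (omega_fixlr def_t) | exact: omega_fixl].
rewrite {1}fix_t; apply: Lle_trans (Lle_mulr t (Lle_omega a)) _.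
by exists A; rewrite mul1lM.
Qed.

Lemma kernel_Rle_mulr t p : in_kernel t -> in_sgen p -> Rle t (t ** p).
Proof.
move=> [st jt] sp; have [A [B def_t]] := jt _ (in_sgen_mul st sp).
rewrite mul1rM in def_t; set b := mul1r p B in def_t.
have fix_t : t = t ** omega b.
  case: A def_t => [a|] /= def_t; last exact: omega_fixr.
  by rewrite fmulA in def_t; case: (omega_fixlr def_t).
rewrite {1}fix_t; apply: Rle_trans (Rle_mull t (Rle_omega b)) _.
by exists B; rewrite mul1rM.
Qed.

Lemma kernel_Lequiv_mull t p : in_kernel t -> in_sgen p -> Lequiv (p ** t) t.
Proof. by move=> kt sp; split; [exists (Some p) | apply: kernel_Lle_mull]. Qed.

Lemma kernel_Lle_omega t : in_kernel t -> Lle t (omega t).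
Proof.
move=> kt; rewrite /omega; case: _.-1 => [|m]; first exact: Lle_refl.
by rewrite spowS; apply: kernel_Lle_mull (in_sgen_spow _ kt.1).
Qed.

Lemma kernel_mul_omega t p : in_kernel t -> in_sgen p -> t ** omega (p ** t) = t.
Proof.
move=> kt sp; have kpt := in_kernel_mull sp kt.
have [A def_t] := Lle_trans (kernel_Lle_mull kt sp) (kernel_Lle_omega kpt).
by rewrite -{1}def_t -mul1lM omega_idem def_t.
Qed.

Lemma kernel_omega_eq g P Q : in_kernel g -> in_sgen P -> in_sgen Q ->
  Lle (g ** P) (g ** Q) -> omega (g ** P) = omega (g ** Q).
Proof.
move=> kg sP sQ gPQ.
have [W def_wP] : Lle (omega (g ** P)) (omega (g ** Q)).
  apply: Lle_trans (Lle_omega _) _; apply: Lle_trans gPQ _.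
  exact/kernel_Lle_omega/in_kernel_mulr.
have wPQ : omega (g ** P) ** omega (g ** Q) = omega (g ** P).
  by rewrite -def_wP -mul1lM omega_idem.
have omega_gX X : in_sgen X -> exists2 Y, in_sgen Y & omega (g ** X) = g ** Y.
  move=> sX; rewrite /omega; case: _.-1 => [|m]; first by exists X.
  exists (X ** spow (g ** X) m); first exact/in_sgen_mul/in_sgen_spow/in_sgen_mul/sX/kg.1.
  by rewrite spowSl fmulA.
have [X sX def_wP'] := omega_gX P sP; have [Y sY def_wQ] := omega_gX Q sQ.
have [Z def_g] := kernel_Rle_mulr kg sX; rewrite -def_wP' in def_g.
have wPg : omega (g ** P) ** g = g by rewrite -{2}def_g -mul1rM omega_idem.
by rewrite -wPQ def_wQ fmulA wPg.
Qed.

End Kernel.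

Lemma minimal_ideal_in_kernel (T : fsg) (phi : letter -> T) e :
  in_minimal_ideal e -> in_kernel phi (iop e T phi).
Proof.
move=> min_e; split; first by exists e.
apply: (min_e (fun u => jbelow phi (iop u T phi))); split.
  by have [_ [[u <-] ju]] := kernel_exists phi; exists u.
by move=> x u jx; split; [apply: jbelow_mull | apply: jbelow_mulr].
Qed.

Section KernelMorphisms.
Variables (S T : fsg) (h : S -> T).
Hypothesis hom_h : is_hom h.

Lemma in_sgen_hom phi t : in_sgen phi t -> in_sgen (h \o phi) (h t).
Proof. by move=> [u <-]; exists u; rewrite (iop_nat u hom_h). Qed.

Lemma in_kernel_hom phi t : in_kernel phi t -> in_kernel (h \o phi) (h t).
Proof.
move=> [st jt]; split; first exact: in_sgen_hom.
move=> _ [u <-]; rewrite -(iop_nat u hom_h).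
have [A [B ->]] := jt _ (ex_intro _ u erefl).
exists (omap h A), (omap h B).
by case: A => [a|]; case: B => [b|] //=; rewrite !hom_h.
Qed.

End KernelMorphisms.

Section Pseudoidentity.
Variable k : nat.

Definition pid_base (T : fsg) (phi : letter -> T) : T :=
  spow (omega (phi la) ** phi lb) (k - 2).
Definition pid_lhs (T : fsg) (phi : letter -> T) (E : T) : T :=
  omega (E ** phi lc ** pid_base phi).
Definition pid_rhs (T : fsg) (phi : letter -> T) (E : T) : T :=
  omega (E ** phi lc ** omega1 (pid_base phi)).

Lemma natural_pid_lhs : natural pid_lhs.
Proof.
move=> S T h hom_h phi E.
by rewrite /pid_lhs /pid_base !(hom_omega hom_h, hom_spow hom_h, hom_h).
Qed.

Lemma natural_pid_rhs : natural pid_rhs.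
Proof.
move=> S T h hom_h phi E.
by rewrite /pid_rhs /pid_base /omega1 !(hom_omega hom_h, hom_spow hom_h, hom_h).
Qed.

Definition kernel_class : fsg -> Prop :=
  holds_at pid_lhs pid_rhs (fun T phi E => in_kernel phi E).

Lemma kernel_class_pv : pseudovariety kernel_class.
Proof.
apply: holds_at_pv natural_pid_lhs natural_pid_rhs _ _ => [S T h hom_h phi E|].
  exact: in_kernel_hom.
move=> S T h hom_h h_surj phi E [[u def_E] jE].
have [psi def_phi] := surj_lift h_surj phi.
have [W [sW jW]] := kernel_exists psi.
pose E0 := iop u S psi.
have hE0 : h E0 = E by rewrite /E0 (iop_nat u hom_h) def_phi.
exists psi, (E0 ** omega (W ** E0)); split => //.
  have sE0 : in_sgen psi E0 by exists u.
  exact/in_kernel_mull/in_kernel_omega/in_kernel_mulr.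
rewrite hom_h (hom_omega hom_h) hom_h hE0 (@kernel_mul_omega _ phi) //.
  by split=> //; exists u.
by rewrite -def_phi; apply: in_sgen_hom.
Qed.

Definition sat_class e : fsg -> Prop :=
  holds_at pid_lhs pid_rhs (fun T phi E => E = iop e T phi).

Lemma sat_class_pv e : pseudovariety (sat_class e).
Proof.
apply: holds_at_pv natural_pid_lhs natural_pid_rhs _ _ => [S T h hom_h phi E ->|].
  exact: iop_nat.
move=> S T h hom_h h_surj phi E ->.
have [psi def_phi] := surj_lift h_surj phi.
by exists psi, (iop e S psi); rewrite (iop_nat e hom_h) def_phi.
Qed.

Lemma sat_pidE e T : sat_pid k e T <-> sat_class e T.
Proof. by split=> [sat phi E ->|sat phi]; [apply: sat | apply: sat]. Qed.

Lemma kernel_class_sat e T : in_minimal_ideal e -> kernel_class T -> sat_class e T.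
Proof. by move=> min_e KT phi E ->; apply/KT/minimal_ideal_in_kernel. Qed.

End Pseudoidentity.

(* x^k = x^(k+1), since [spow x n] is x^(n+1). *)
Definition pow_stable k : fsg -> Prop :=
  holds_at (fun T _ x => spow x (k - 1)) (fun T _ x => spow x k) (fun _ _ _ => True).

Lemma pow_stable_pv k : pseudovariety (pow_stable k).
Proof.
apply: holds_at_pv => //; try by move=> S T h hom_h phi x; apply: hom_spow.
move=> S T h hom_h h_surj phi x _; have [psi def_phi] := surj_lift h_surj phi.
by have [x' def_x] := h_surj x; exists psi, x'.
Qed.

Lemma barpred_rho (S : fsg) (s : S) : barpred (rho s).
Proof. by apply/orP; left; apply/existsP; exists s. Qed.

Lemma barpred_cst (S : fsg) (t : Bul S) : barpred (cst t).
Proof. by apply/orP; right; apply/existsP; exists t. Qed.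

Section Ok.
Variable k : nat.
Hypothesis k_ge2 : 2 <= k.
Local Notation O := (Osg k).

Lemma toraw_inj : injective (@toraw k).
Proof. by move=> s t st; rewrite -(torawK s) -(torawK t) st. Qed.

Lemma torawM (s t : O) : toraw (s ** t) = rmul k (toraw s) (toraw t).
Proof. by rewrite /= /omul fromrawK // rmul_valid. Qed.

Definition nf (p : nat * bool) := if okv k p then Some p else None.

Lemma rmul_nf i b q : (i, b) != (0, false) ->
  rmul k (nf (i, b)) (Some q) = nf (i + q.1, q.2 || b && (q.1 == 0)).
Proof.
case: q => j c /= ib_neq0; rewrite /nf; case: ifP => //= /negbT.
rewrite /nf okvE; case: ifP => //; rewrite okvE.
by move: ib_neq0; rewrite xpair_eqE; case: b; case: c => /=; lia.
Qed.

Lemma nf_valid p : okv k p -> nf p = Some p.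
Proof. by rewrite /nf => ->. Qed.

Lemma toraw_nf p : toraw (fromraw k (nf p)) = nf p.
Proof. by rewrite fromrawK // /nf; case: ifP. Qed.

Definition oe : O := fromraw k (nf (0, true)).
Definition xpow i : O := fromraw k (nf (i, false)).
Definition ox : O := xpow 1.

Lemma toraw_oe : toraw oe = Some (0, true).
Proof. by rewrite toraw_nf nf_valid // okvE; lia. Qed.

Lemma toraw_ox : toraw ox = Some (1, false).
Proof. by rewrite toraw_nf nf_valid // okvE; lia. Qed.

Lemma xpowS i : 0 < i -> xpow i ** ox = xpow i.+1.
Proof.
move=> i_gt0; apply: toraw_inj.
by rewrite torawM toraw_ox toraw_nf rmul_nf ?toraw_nf ?addn1 //; case: i i_gt0.
Qed.

Lemma oe_idem : oe ** oe = oe.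
Proof. by apply: toraw_inj; rewrite torawM toraw_oe /= okvE; case: ifP => //; lia. Qed.

Lemma oe_ox : oe ** ox = ox.
Proof. by apply: toraw_inj; rewrite torawM toraw_oe toraw_ox /= okvE; case: ifP => //; lia. Qed.

Lemma xpow_pred_square : xpow (k - 1) ** xpow (k - 1) = None.
Proof.
apply: toraw_inj; rewrite torawM toraw_nf nf_valid ?okvE /=; last lia.
by rewrite okvE; case: ifP => //; lia.
Qed.

Lemma O_not_monoid : is_monoid O = false.
Proof.
apply/negbTE/existsP => -[u /forallP /(_ ox) /andP[_ /eqP/(congr1 (@toraw k))]].
rewrite torawM toraw_ox; have := toraw_valid u.
case: (toraw u) => [[i b]|] //= u_valid; case: ifP => // _ [i0 b0].
by move: u_valid b0; rewrite okvE; case: b => /=; lia.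
Qed.

Lemma bpred_unit : bpred O None.
Proof. by rewrite /bpred O_not_monoid. Qed.

Definition unitB : Bul O := Sub None bpred_unit.
Definition someB (s : O) : Bul O := Sub (Some s) (bpred_bmul None s).

Lemma toraw_spow (s : O) n :
  toraw (spow s n) = if toraw s is Some (i, b) then nf (n.+1 * i, b) else None.
Proof.
have := toraw_valid s; case def_s: (toraw s) => [[i b]|] s_valid;
  elim: n => [|n IH]; rewrite ?spowS ?torawM ?IH ?def_s //.
- by rewrite mul1n nf_valid.
- rewrite rmul_nf /=; last by move: s_valid; rewrite /= okvE xpair_eqE; lia.
  by rewrite [n.+2 * i]mulSn addnC; case: b {s_valid def_s IH}.
Qed.

Definition rhoB (s : O) : Obar k := Sub (rho s) (barpred_rho s).
Definition cstB (t : Bul O) : Obar k := Sub (cst t) (barpred_cst t).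

Lemma rhoB_someB s t : val (rhoB s) (someB t) = someB (t ** s).
Proof. by apply: val_inj; rewrite /= ffunE. Qed.

Lemma rhoB_hom : is_hom rhoB.
Proof.
move=> s t; apply: val_inj; apply/ffunP => b; apply: val_inj.
by rewrite /= !ffunE /= /bmul; case: (val b) => [c|] //=; rewrite omulA.
Qed.

Lemma mul_cstB (F : Obar k) t : F ** cstB t = cstB t.
Proof. by apply: val_inj; apply/ffunP => b; rewrite /= !ffunE. Qed.

Lemma cstB_mul (F : Obar k) t : cstB t ** F = cstB (val F t).
Proof. by apply: val_inj; apply/ffunP => b; rewrite /= !ffunE. Qed.

Lemma cstB_inj : injective cstB.
Proof. by move=> t t' /(congr1 (fun F : Obar k => val F unitB)); rewrite /= !ffunE. Qed.

Lemma rhoB_inj : injective rhoB.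
Proof. by move=> s t /(congr1 (fun F : Obar k => val (val F unitB))); rewrite /= !ffunE => -[]. Qed.

Lemma Obar_cases (F : Obar k) : (exists s, F = rhoB s) \/ (exists t, F = cstB t).
Proof.
case/orP: (valP F) => /existsP[x /eqP def_F]; [left | right];
  by exists x; apply: val_inj.
Qed.

Lemma spow_rhoB_ox n : spow (rhoB ox) n = rhoB (xpow n.+1).
Proof.
by elim: n => [|n IH] //; rewrite spowS IH -rhoB_hom xpowS.
Qed.

Lemma Obar_ind (P : Obar k -> Prop) :
  (forall F G, P F -> P G -> P (F ** G)) ->
  P (rhoB oe) -> P (rhoB ox) -> (forall t, P (cstB t)) -> forall F, P F.
Proof.
move=> PM Pe Px Pc F; case: (Obar_cases F) => [[s ->]|[t ->]] //.
have Pxpow i : P (rhoB (xpow i.+1)) by rewrite -spow_rhoB_ox; elim: i => // i IH; apply: PM.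
have := toraw_valid s; case def_s: (toraw s) => [[[|i] [|]]|] s_valid.
- by rewrite (_ : s = oe) //; apply: toraw_inj; rewrite def_s toraw_oe.
- by move: s_valid; rewrite /= /okv /= andbF.
- rewrite (_ : s = xpow i.+1 ** oe); first by rewrite rhoB_hom; apply: PM.
  apply: toraw_inj; rewrite def_s torawM toraw_oe toraw_nf rmul_nf //=.
  by rewrite addn0 nf_valid.
- by rewrite (_ : s = xpow i.+1) //; apply: toraw_inj; rewrite def_s toraw_nf nf_valid.
- rewrite (_ : s = xpow k.-1.+1) //; apply: toraw_inj; rewrite def_s toraw_nf /nf.
  by rewrite okvE; case: ifP => //; lia.
Qed.

Lemma Obar_pow_stable : pow_stable k (Obar k).
Proof.
move=> _ F _; case: (Obar_cases F) => [[s ->]|[t ->]]; last first.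
  by rewrite !spow_idem // mul_cstB.
rewrite -!(hom_spow rhoB_hom); congr rhoB; apply: toraw_inj; rewrite !toraw_spow.
case: (toraw s) => [[[|i] b]|] //; first by rewrite !muln0.
by rewrite /nf !okvE; case: ifP; case: ifP => //; lia.
Qed.

Definition phiO (l : letter) : Obar k :=
  match l with la => rhoB oe | lb => rhoB ox | lc => cstB (someB oe) end.

Lemma Obar_fails E : pid_lhs k phiO E <> pid_rhs k phiO E.
Proof.
have base : pid_base k phiO = rhoB (xpow (k - 1)).
  rewrite /pid_base -[phiO la]/(rhoB oe) -[phiO lb]/(rhoB ox).
  rewrite omega_of_idem; last by rewrite -rhoB_hom oe_idem.
  by rewrite -rhoB_hom oe_ox spow_rhoB_ox; congr (rhoB (xpow _)); lia.
have square : spow (xpow (k - 1)) 1 = None := xpow_pred_square.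
have zero : omega1 (xpow (k - 1)) = None.
  by rewrite /omega1 -(omega_idem_spow (n := 1)) square.
rewrite /pid_lhs /pid_rhs base -(hom_omega1 rhoB_hom) zero -[phiO lc]/(cstB (someB oe)).
rewrite !mul_cstB !cstB_mul !omega_of_idem ?mul_cstB // !rhoB_someB.
move/cstB_inj/(congr1 (fun b : Bul O => omap (@toraw k) (val b))) => /=.
rewrite !torawM toraw_oe toraw_nf nf_valid /=; last by rewrite okvE; lia.
by rewrite add0n okvE; case: ifP => //; lia.
Qed.

End Ok.

Lemma Obar_not_pow_stable k l : 2 <= k -> k < l -> ~ pow_stable k (Obar l).
Proof.
move=> k_ge2 lt_kl stable; have l_ge2 : 2 <= l by lia.
have := stable (fun=> rhoB (ox l)) (rhoB (ox l)) I.
rewrite !(spow_rhoB_ox l_ge2) => /(rhoB_inj l_ge2) /(congr1 (@toraw l)).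
rewrite !toraw_nf (_ : (k - 1).+1 = k); last lia.
rewrite [nf l (k, false)]nf_valid; last by rewrite okvE; lia.
by rewrite /nf; case: ifP => // _ [k_eq]; lia.
Qed.

Section Realisation.
Variable k : nat.
Hypothesis k_ge2 : 2 <= k.
Variables (T : fsg) (phi : letter -> T) (E : T).
Hypothesis kernel_E : in_kernel phi E.
Hypothesis fails : pid_lhs k phi E <> pid_rhs k phi E.

Local Notation O := (Osg k).
Local Notation sgen := (in_sgen phi).
Local Notation kernel := (in_kernel phi).

Let aw := omega (phi la).
Let y := aw ** phi lb.
Let g := E ** phi lc.
Definition gy i := iter i (fun z => z ** y) g.

Lemma aw_idem : aw ** aw = aw.
Proof. exact: omega_idem. Qed.

Lemma aw_y : aw ** y = y.
Proof. by rewrite /y fmulA aw_idem. Qed.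

Lemma sgen_aw : sgen aw.
Proof. exact/in_sgen_omega/in_sgen_letter. Qed.

Lemma sgen_y : sgen y.
Proof. exact/in_sgen_mul/in_sgen_letter/sgen_aw. Qed.

Lemma kernel_gy i : kernel (gy i).
Proof.
elim: i => [|i IH]; last exact: in_kernel_mulr IH sgen_y.
exact/in_kernel_mulr/in_sgen_letter.
Qed.

Lemma gyS i : gy i.+1 = gy i ** y.
Proof. by []. Qed.

Lemma gy_addS i m : gy (i + m.+1) = gy i ** spow y m.
Proof. by elim: m => [|m IH]; rewrite ?addn1 // addnS gyS IH spowS fmulA. Qed.

Lemma gy_add i m : gy (i + m) = iter m (fun z => z ** y) (gy i).
Proof. by rewrite /gy addnC iterD. Qed.

Lemma not_Lle_gy_omega : ~ Lle (gy (k - 1)) (gy (k - 1) ** omega y).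
Proof.
have gyk : gy (k - 1) = g ** pid_base k phi.
  by rewrite (_ : k - 1 = 0 + (k - 2).+1) ?gy_addS //; lia.
move=> le; apply: fails; apply: kernel_omega_eq (kernel_gy 0) _ _ _.
- exact/in_sgen_spow/sgen_y.
- exact/in_sgen_mul/in_sgen_spow/sgen_y/in_sgen_omega/in_sgen_spow/sgen_y.
rewrite -gyk /omega1 /pid_base -/aw -/y omega_spow omega_commute fmulA -/(pid_base k phi) -gyk.
exact: le.
Qed.

Lemma Lequiv_gy_omega i j : i < j -> Lequiv (gy i) (gy j) -> Lequiv (gy i) (gy i ** omega y).
Proof.
move=> lt_ij ij; set d := j - i.
have period m : Lequiv (gy i) (gy (i + m * d)).
  elim: m => [|m IH]; first by rewrite addn0; apply: Lequiv_refl.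
  apply: Lequiv_trans IH _; rewrite (_ : i + m.+1 * d = j + m * d); last by rewrite mulSn /d; lia.
  rewrite !gy_add; elim: (m * d) => //= n IHn; exact: Lequiv_mulr.
have := period #|T|`!; rewrite (_ : i + _ * d = i + (d * #|T|`!).-1.+1).
  by rewrite gy_addS omega_spow_mul // /d; lia.
have dN : 0 < d * #|T|`! by rewrite muln_gt0 subn_gt0 lt_ij fact_gt0.
by rewrite prednK // mulnC.
Qed.

Lemma gy_chain i j : i < j -> i <= k - 1 -> ~ Lequiv (gy i) (gy j).
Proof.
move=> lt_ij le_ik /(Lequiv_gy_omega lt_ij) [le _]; apply: not_Lle_gy_omega.
have [lt_ik|eq_ik] : i < k - 1 \/ i = k - 1 by lia.
  rewrite (_ : k - 1 = i + (k - 2 - i).+1); last lia.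
  by rewrite gy_addS -fmulA -omega_commute fmulA; apply: Lle_mulr.
by rewrite -eq_ik.
Qed.

Lemma gy_Lequiv_inj i j : i <= 2 -> j <= 2 -> Lequiv (gy i) (gy j) -> i = j.
Proof.
move=> le_i2 le_j2 ij; case: (ltngtP i j) => // [lt_ij|lt_ji]; exfalso.
- by apply: gy_chain ij; lia.
- by apply: gy_chain (Lequiv_sym ij); lia.
Qed.

Definition rep1 (p : nat * bool) : T := if p.2 then gy p.1 ** aw else gy p.1.

Lemma rep1_mul_aw p : rep1 p ** aw = rep1 (p.1, true).
Proof. by case: p => i [|] //=; rewrite -fmulA aw_idem. Qed.

Lemma rep1_mul_y p : rep1 p ** y = gy p.1.+1.
Proof. by case: p => i [|] //=; rewrite -fmulA aw_y. Qed.

Lemma kernel_rep1 p : kernel (rep1 p).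
Proof. by case: p => i [|]; [apply: in_kernel_mulr (kernel_gy i) sgen_aw | apply: kernel_gy]. Qed.

Lemma rep1_chain i j (b : bool) : i < j -> i + b <= k - 1 -> ~ Lequiv (rep1 (i, b)) (rep1 (j, b)).
Proof.
case: b => /= lt_ij; rewrite ?addn0 ?addn1 => le_ik; last exact: gy_chain.
by move/(Lequiv_mulr y); rewrite -!fmulA aw_y -!gyS; apply: (@gy_chain i.+1 j.+1); lia.
Qed.

Lemma rep1_Lequiv_nf i j b : Lequiv (rep1 (i, b)) (rep1 (j, b)) -> nf k (i, b) = nf k (j, b).
Proof.
wlog lt_ij : i j / i < j.
  move=> W ij; case: (ltngtP i j) => [/W -> //|lt_ji|-> //].
  by rewrite (W j i lt_ji) //; apply: Lequiv_sym.
move=> ij; have in_range : okv k (i, b) || okv k (j, b) -> i + b <= k - 1.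
  by rewrite !okvE; case: (b); lia.
rewrite /nf; case: ifP => ok_i; case: ifP => ok_j //; exfalso;
  by apply: rep1_chain lt_ij (in_range _) ij; rewrite ?ok_i ?ok_j ?orbT.
Qed.

Definition rawB (t : Bul O) : option (option (nat * bool)) := omap (@toraw k) (val t).

Lemma rawB_inj : injective rawB.
Proof.
move=> t t' eq_tt'; apply: val_inj; move: eq_tt'; rewrite /rawB.
by case: (val t) => [s|]; case: (val t') => [s'|] //= [/toraw_inj ->].
Qed.

Lemma rawB_rhoB s t : rawB (val (rhoB s) t) =
  Some (if rawB t is Some r then rmul k r (toraw s) else toraw s).
Proof. by rewrite /rawB /= ffunE /=; case: (val t) => //= s'; rewrite torawM. Qed.

(* The element of O_k^I with raw form r is encoded by a pair of L-classes: the
   adjoined identity by those of (g, gy 2), and the element nf p by those of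
   (rep1 p, gy (~~ p.2)), the zero admitting several such p. *)
Definition encodes (r : option (option (nat * bool))) (z : T * T) : Prop :=
  [/\ sgen z.1, sgen z.2 &
   if r is Some o then
     exists p, [/\ p != (0, false), o = nf k p, Lequiv z.1 (rep1 p) & Lequiv z.2 (gy (~~ p.2))]
   else Lequiv z.1 g /\ Lequiv z.2 (gy 2)].

Lemma encodes_uniq r r' z : encodes r z -> encodes r' z -> r = r'.
Proof.
move=> [_ _ enc] [_ _ enc'].
case: r enc => [o [[i b] [_ -> z1 z2]]|[z1 z2]];
  case: r' enc' => [o' [[i' b'] [_ -> z1' z2']]|[z1' z2']] //.
- have eq_b : b = b'.
    have := gy_Lequiv_inj _ _ (Lequiv_trans (Lequiv_sym z2) z2').
    by case: (b); case: (b') => /(_ isT isT).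
  by rewrite -eq_b in z1' *; congr Some; apply: rep1_Lequiv_nf (Lequiv_trans (Lequiv_sym z1) z1').
- by have := gy_Lequiv_inj _ _ (Lequiv_trans (Lequiv_sym z2) z2'); case: (b) => /(_ isT isT).
- by have := gy_Lequiv_inj _ _ (Lequiv_trans (Lequiv_sym z2) z2'); case: (b') => /(_ isT isT).
Qed.

Definition rep (r : option (option (nat * bool))) : T * T :=
  if r is Some o then let p := odflt (k, false) o in (rep1 p, gy (~~ p.2)) else (g, gy 2).

Lemma kernel_rep r : kernel (rep r).1 /\ kernel (rep r).2.
Proof.
by case: r => [o|]; split;
  [apply: kernel_rep1 | apply: kernel_gy | apply: (kernel_gy 0) | apply: kernel_gy].
Qed.

Lemma encodes_rep t : encodes (rawB t) (rep (rawB t)).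
Proof.
have [[s1 _] [s2 _]] := kernel_rep (rawB t); split=> //.
rewrite /rawB; case: (val t) => [s|] /=; last by split; apply: Lequiv_refl.
have := toraw_valid s; case: (toraw s) => [p|] /= valid.
  exists p; split; try exact: Lequiv_refl; last by rewrite nf_valid.
  by apply: contraTneq valid => ->; rewrite /okv /= andbF.
exists (k, false); split; try exact: Lequiv_refl; first by rewrite xpair_eqE; lia.
by rewrite /nf okvE ltnn.
Qed.

Lemma encodes_Lequiv r z z' : encodes r z -> sgen z'.1 -> sgen z'.2 ->
  Lequiv z'.1 z.1 -> Lequiv z'.2 z.2 -> encodes r z'.
Proof.
move=> [_ _ enc] s1 s2 z1 z2; split=> //; case: r enc => [o [p [p_neq0 def_o zp1 zp2]]|[zg1 zg2]].
  by exists p; split=> //; apply: Lequiv_trans; eassumption.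
by split; apply: Lequiv_trans; eassumption.
Qed.

Definition acts (F : Obar k) (s : T * T) : Prop :=
  forall t z, encodes (rawB t) z -> encodes (rawB (val F t)) (z.1 ** s.1, z.2 ** s.2).

Lemma acts_uniq F F' s : acts F s -> acts F' s -> F = F'.
Proof.
move=> act act'; apply: val_inj; apply/ffunP => t; apply: rawB_inj.
exact: encodes_uniq (act _ _ (encodes_rep t)) (act' _ _ (encodes_rep t)).
Qed.

Lemma acts_mul F F' s s' : acts F s -> acts F' s' -> acts (F ** F') (fmul (Defs.fprod T T) s s').
Proof. by move=> act act' t z /act /act'; rewrite /= ffunE /= !fmulA. Qed.

Lemma acts_oe : acts (rhoB (oe k)) (aw, g).
Proof.
move=> t z [s1 s2 enc]; rewrite rawB_rhoB (toraw_oe k_ge2).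
split; [exact: in_sgen_mul s1 sgen_aw | exact: in_sgen_mul s2 (kernel_gy 0).1 |].
have z2g : Lequiv (z.2 ** g) (gy 0) := kernel_Lequiv_mull (kernel_gy 0) s2.
case: (rawB t) enc => [o [[i b] [ib_neq0 -> z1 _]]|[z1 _]].
  exists (i, true); split=> //; first by rewrite xpair_eqE andbF.
    by rewrite rmul_nf // addn0.
  by rewrite -(rep1_mul_aw (i, b)); apply: Lequiv_mulr.
exists (0, true); split=> //; last exact: Lequiv_mulr.
by rewrite nf_valid // okvE; lia.
Qed.

Lemma acts_ox : acts (rhoB (ox k)) (y, g ** y).
Proof.
move=> t z [s1 s2 enc]; rewrite rawB_rhoB (toraw_ox k_ge2).
split; [exact: in_sgen_mul s1 sgen_y | exact: in_sgen_mul s2 (kernel_gy 1).1 |].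
have z2gy : Lequiv (z.2 ** (g ** y)) (gy 1) := kernel_Lequiv_mull (kernel_gy 1) s2.
case: (rawB t) enc => [o [[i b] [ib_neq0 -> z1 _]]|[z1 _]].
  exists (i.+1, false); split=> //; first by rewrite rmul_nf // addn1 andbF.
  by move: (Lequiv_mulr y z1); rewrite rep1_mul_y.
exists (1, false); split=> //; last exact: Lequiv_mulr.
by rewrite nf_valid // okvE; lia.
Qed.

Lemma acts_cstB t : acts (cstB t) (rep (rawB t)).
Proof.
have [kr1 kr2] := kernel_rep (rawB t).
move=> t' z [s1 s2 _]; rewrite /= ffunE; apply: encodes_Lequiv (encodes_rep t) _ _ _ _.
- exact: in_sgen_mul s1 kr1.1.
- exact: in_sgen_mul s2 kr2.1.
- exact: kernel_Lequiv_mull kr1 s1.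
- exact: kernel_Lequiv_mull kr2 s2.
Qed.

Definition realises (s : T * T) : Prop := [/\ sgen s.1, sgen s.2 & exists F, acts F s].

Lemma realises_mul s s' : realises s -> realises s' -> realises (fmul (Defs.fprod T T) s s').
Proof.
move=> [s1 s2 [F act]] [s1' s2' [F' act']].
by split; [exact: in_sgen_mul | exact: in_sgen_mul | exists (F ** F'); exact: acts_mul].
Qed.

Definition Ucar : finType :=
  {s : Defs.fprod T T | is_left (excluded_middle_informative (realises s))}.

Lemma realisesP (u : Ucar) : realises (val u).
Proof. by case: u => s /= /sumboolP. Qed.

Definition Umul (u v : Ucar) : Ucar :=
  Sub (fmul _ (val u) (val v)) (introT (sumboolP _) (realises_mul (realisesP u) (realisesP v))).

Lemma UmulA : associative Umul.
Proof. by move=> u v w; apply: val_inj; apply: fmulA. Qed.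

Lemma realises_oe : realises (aw, g).
Proof.
by split; [exact: sgen_aw | exact: (kernel_gy 0).1 | exists (rhoB (oe k)); exact: acts_oe].
Qed.

Lemma Ucar_ne : 0 < #|Ucar|.
Proof. by apply/card_gt0P; exists (Sub (aw, g) (introT (sumboolP _) realises_oe)). Qed.

Definition U : fsg := FSG UmulA Ucar_ne.

Lemma realises_acts (u : U) : exists F, acts F (val u).
Proof. by case: (realisesP u). Qed.

Definition decode (u : U) : Obar k :=
  proj1_sig (constructive_indefinite_description _ (realises_acts u)).

Lemma decodeP u : acts (decode u) (val u).
Proof. by rewrite /decode; case: constructive_indefinite_description. Qed.

Lemma decode_hom : is_hom decode.
Proof.
by move=> u v; exact: (acts_uniq (decodeP (fmul U u v)) (acts_mul (decodeP u) (decodeP v))).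
Qed.

Lemma decode_surj F : exists u, decode u = F.
Proof.
have realised F' s : realises s -> acts F' s -> exists u, decode u = F'.
  move=> rs act; pose u : U := Sub s (introT (sumboolP _) rs).
  by exists u; exact: (acts_uniq (decodeP u) act).
elim/(Obar_ind k_ge2): F => [F F' [u <-] [u' <-]|||t].
- by exists (fmul U u u'); rewrite decode_hom.
- exact: realised realises_oe acts_oe.
- apply: (realised _ (y, g ** y)) acts_ox.
  by split; [exact: sgen_y | exact: (kernel_gy 1).1 | exists (rhoB (ox k)); exact: acts_ox].
- have [kr1 kr2] := kernel_rep (rawB t).
  apply: (realised _ _ _ (acts_cstB t)).
  by split; [exact: kr1.1 | exact: kr2.1 | exists (cstB t); exact: acts_cstB].
Qed.

Lemma Obar_in_pv_of : pv_of T (Obar k).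
Proof.
move=> V [_ V_prod V_sub V_quo] /(_ T erefl) VT.
have VU : V U.
  apply: (V_sub _ _ (fun u : U => val u : Defs.fprod T T)) (V_prod _ _ VT VT) => //.
  exact: val_inj.
exact: (V_quo _ _ decode decode_hom decode_surj VU).
Qed.

End Realisation.

Lemma not_kernel_class_pv_of k T : 2 <= k -> ~ kernel_class k T -> pv_of T (Obar k).
Proof.
move=> k_ge2 notK; apply: NNPP => notpv; apply: notK => phi E kE.
by apply: NNPP => fails; exact: notpv (Obar_in_pv_of k_ge2 kE fails).
Qed.

Lemma Obar_not_kernel_class k : 2 <= k -> ~ kernel_class k (Obar k).
Proof.
move=> k_ge2 KO; have [E kE] := kernel_exists (phiO k).
exact: Obar_fails k_ge2 _ (KO _ _ kE).
Qed.

Lemma Obar_not_sat_class k e : 2 <= k -> ~ sat_class k e (Obar k).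
Proof. by move=> k_ge2 sat; apply: (Obar_fails k_ge2 (E := iop e _ (phiO k))); apply: sat. Qed.

Theorem theorem4p18 :
  (forall k : nat, 2 <= k ->
     join_irreducible (pv_of (Obar k)) /\
     (forall e : impl, impl_mul e e = e -> in_minimal_ideal e ->
        forall T : fsg, Excl (Obar k) T <-> sat_pid k e T)) /\
  (forall k l : nat, 2 <= k -> 2 <= l -> k <> l ->
     ~ (forall T : fsg, pv_of (Obar k) T <-> pv_of (Obar l) T)).
Proof.
split=> [k k_ge2|].
  split; first exact: join_irreducible_pv_of (kernel_class_pv k)
    (Obar_not_kernel_class k_ge2) (fun T => not_kernel_class_pv_of k_ge2).
  move=> e _ min_e T; rewrite sat_pidE; split=> [excl|sat gen].
    apply: kernel_class_sat min_e _; apply: NNPP => notK.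
    exact: excl (not_kernel_class_pv_of k_ge2 notK).
  exact: Obar_not_sat_class k_ge2 (pv_of_min (sat_class_pv k e) sat gen).
move=> k l k_ge2 l_ge2 neq_kl same.
wlog lt_kl : k l k_ge2 l_ge2 neq_kl same / k < l.
  move=> W; case: (ltngtP k l) => [lt_kl|lt_lk|//]; first exact: (W k l).
  by apply: (W l k) => // [|T]; [apply: nesym | split=> /same].
have /(pv_of_min (pow_stable_pv k) (Obar_pow_stable k_ge2)) := (same (Obar l)).2 (@pv_of_self _).
exact: Obar_not_pow_stable.
Qed.
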